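(* Let $K>1$ be real, $q\ge2$, and let $\mathbf{u}$ be a probability distribution on $[1:q]$. For all sufficiently large $n$, if $\mathbf{t}\in\mathcal{N}_{q,n}$ satisfies $|t_i-(n+1)u_i|\ge K\sqrt{n\log n}$ for some $i\in[1:q]$, then $$M_{n,\mathbf{u}}(\mathbf{t})\le n^{-\frac12(K^2-1)}.$$
   Context: $\mathcal{N}_{q,n}=\{\mathbf{t}\in\mathbb{Z}_{\ge0}^q:\sum_it_i=n\}$; $M_{n,\mathbf{u}}(\mathbf{t})=\frac{n!}{t_1!\cdots t_q!}\prod_iu_i^{t_i}$ (with $0^0=1$). Logarithms base 2. *)

From mathcomp Require Import all_boot all_order all_algebra.
From mathcomp Require Import reals exp.
Set Implicit Arguments. Unset Strict Implicit. Unset Printing Implicit Defensive.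
Import Order.TTheory GRing.Theory Num.Theory.
Local Open Scope ring_scope.

Definition log2 {R : realType} (x : R) : R := ln x / ln 2.

Definition inN (q n : nat) (t : 'I_q -> nat) : bool := (\sum_(i < q) t i)%N == n.

Definition is_prob {R : realType} (q : nat) (u : 'I_q -> R) : Prop :=
  (forall i, 0 <= u i) /\ \sum_(i < q) u i = 1.

(* multinomial probability M_{n,u}(t) = n!/(t_1!...t_q!) prod u_i^{t_i}, 0^0 = 1 *)
Definition Mult {R : realType} (q n : nat) (u : 'I_q -> R) (t : 'I_q -> nat) : R :=
  (n`!)%:R / (\prod_(i < q) ((t i)`!)%:R) * \prod_(i < q) u i ^+ t i.

From mathcomp Require Import all_boot all_order all_algebra.
From mathcomp Require Import reals exp sequences.
From mathcomp Require Import ring lra.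
Set Implicit Arguments. Unset Strict Implicit. Unset Printing Implicit Defensive.
Import Order.TTheory GRing.Theory Num.Theory.
Local Open Scope ring_scope.

(* Chernoff bound for the multinomial law.  Tilting the coordinates of a set
   S of indices by e^mu, the multinomial theorem gives
   M_{n,u}(t) e^(mu T) <= (1 + (e^mu - 1) P)^n <= exp (n (e^mu - 1) P),
   where T = sum_S t_j and P = sum_S u_j.  If T <= n P - d with d >= 0, the
   choice mu = -4d/(5n) and the bound e^mu <= 1 + mu + 5/8 mu^2 (mu <= 0,
   from e^y >= (1 + y/4)^4) give M_{n,u}(t) <= exp (-2d^2/(5n)).  An excess
   of t_i over n u_i is a deficit for S = [1:q] \ {i}, a deficit of t_i one
   for S = {i}.  Take d = K sqrt (n log n) - 1, the -1 absorbing the shift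
   from (n+1) u_i to n u_i; since ln 2 <= 4/5, the exponent 2d^2/(5n) is at
   least (K^2 - 1)/2 ln n as soon as n > 4K^2. *)

Section ExpLnBounds.
Variable R : realType.
Implicit Types x : R.

Lemma pow1Dx_divn_le_expR (n : nat) x : 0 <= x ->
  (1 + x / n.+1%:R) ^+ n.+1 <= expR x.
Proof.
move=> x_ge0; rewrite -[x in expR x](@divfK _ n.+1%:R) ?pnatr_eq0 //.
rewrite expRM_natr lerXn2r ?nnegrE ?expR_ge0 ?expR_ge1Dx //.
by rewrite addr_ge0 ?divr_ge0.
Qed.

Lemma expR_le_quad x : x <= 0 -> expR x <= 1 + x + 5/8 * x ^+ 2.
Proof.
move=> x_le0; set y := - x; have y_ge0 : 0 <= y by rewrite /y oppr_ge0.
rewrite -[x]opprK -/y expRN sqrrN.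
have quad_gt0 : 0 < 1 - y + 5/8 * y ^+ 2.
  have := sqr_ge0 (y - 4/5); rewrite sqrrB; lra.
rewrite -[leLHS]mul1r ler_pdivrMr ?expR_gt0 //.
apply: (le_trans _ (ler_wpM2l (ltW quad_gt0) (pow1Dx_divn_le_expR 3 y_ge0))).
have : 0 <= y ^+ 3 * (640 + 360 * y + 72 * y ^+ 2 + 5 * y ^+ 3).
  apply: mulr_ge0; first exact: exprn_ge0.
  have := exprn_ge0 2 y_ge0; have := exprn_ge0 3 y_ge0; lra.
suff -> : (1 - y + 5/8 * y ^+ 2) * (1 + y / 3.+1%:R) ^+ 3.+1
   = 1 + y ^+ 3 * (640 + 360 * y + 72 * y ^+ 2 + 5 * y ^+ 3) / 2048 by lra.
by field.
Qed.

Lemma ln2_le : ln (2 : R) <= 4/5.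
Proof.
rewrite -[leRHS]expRK ler_ln ?posrE ?expR_gt0 //.
apply: (le_trans _ (@pow1Dx_divn_le_expR 3 (4/5) _)); last lra.
have -> : 1 + 4 / 5 / 3.+1%:R = 6/5 :> R by field.
rewrite !exprS expr0; lra.
Qed.

Lemma log2_ge1 x : 2 <= x -> 1 <= log2 x.
Proof.
move=> x_ge2; have ln2_gt0 : 0 < ln (2 : R) by rewrite ln_gt0 // ltr1n.
by rewrite /log2 ler_pdivlMr // mul1r ler_ln ?posrE // (lt_le_trans _ x_ge2).
Qed.

Lemma ln_le_log2 x : 2 <= x -> ln x <= 4/5 * log2 x.
Proof.
move=> x_ge2; have ln2_gt0 : 0 < ln (2 : R) by rewrite ln_gt0 // ltr1n.
rewrite -[leLHS](@mulfVK _ (ln 2)) ?gt_eqF // mulrC -/(log2 x).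
by rewrite ler_wpM2r ?ln2_le // (le_trans _ (log2_ge1 x_ge2)).
Qed.

Lemma expR_dev_le_powR (K x : R) : 1 < K -> 2 <= x ->
    2 * K <= Num.sqrt (x * log2 x) ->
  expR (- (2/5) * ((K * Num.sqrt (x * log2 x) - 1) ^+ 2 / x))
    <= powR x (- ((K ^+ 2 - 1) / 2)).
Proof.
move=> K_gt1 x_ge2; set L := log2 x; set s := Num.sqrt (x * L) => s_ge.
have x_gt0 : 0 < x by apply: lt_le_trans x_ge2.
have L_ge1 : 1 <= L := log2_ge1 x_ge2.
have s2 : s ^+ 2 = x * L by rewrite sqr_sqrtr // mulr_ge0 ?ltW //; lra.
have dev_sq : (K ^+ 2 - 1) * (x * L) <= (K * s - 1) ^+ 2.
  have : 0 <= s * (s - 2 * K) by rewrite mulr_ge0 ?subr_ge0 //; lra.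
  rewrite -s2; nra.
have dev_L : (K ^+ 2 - 1) * L <= (K * s - 1) ^+ 2 / x.
  by rewrite ler_pdivlMr //; nra.
have lnx_le : (K ^+ 2 - 1) * ln x <= (K ^+ 2 - 1) * (4/5 * L).
  by rewrite ler_wpM2l ?ln_le_log2 //; nra.
rewrite /powR ifF ?gt_eqF // ler_expR; lra.
Qed.

End ExpLnBounds.

Section Multinomial.
Variables (R : realType) (q : nat).
Implicit Types (w : 'I_q -> R) (t : 'I_q -> nat).

Lemma Mult_rec n w t (j : 'I_q) (s : nat) : t j = s.+1 ->
  (t j)%:R * Mult n.+1 w t =
  n.+1%:R * w j * Mult n w (fun k => if k == j then s else t k).
Proof.
move=> tj; set t' := fun k => _.
pose F := \prod_(k | k != j) ((t k)`!)%:R : R.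
pose W := \prod_(k | k != j) w k ^+ t k.
have fact_t : \prod_k ((t k)`!)%:R = ((s.+1)`!)%:R * F by rewrite (bigD1 j) //= tj.
have fact_t' : \prod_k ((t' k)`!)%:R = (s`!)%:R * F.
  by rewrite (bigD1 j) //= /t' eqxx; congr (_ * _); apply: eq_bigr => k /negbTE ->.
have pow_t : \prod_k w k ^+ t k = w j ^+ s.+1 * W by rewrite (bigD1 j) //= tj.
have pow_t' : \prod_k w k ^+ t' k = w j ^+ s * W.
  by rewrite (bigD1 j) //= /t' eqxx; congr (_ * _); apply: eq_bigr => k /negbTE ->.
have F_neq0 : F != 0.
  by rewrite /F -natr_prod pnatr_eq0 -lt0n prodn_gt0 // => k; exact: fact_gt0.
have s_neq0 : (s`!)%:R != 0 :> R by rewrite pnatr_eq0 -lt0n fact_gt0.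
rewrite /Mult fact_t fact_t' pow_t pow_t' tj !factS !natrM exprS.
by field; rewrite F_neq0 s_neq0 nat1r pnatr_eq0.
Qed.

Lemma Mult_le_expr_sum n w t : (forall j, 0 <= w j) -> inN n t ->
  Mult n w t <= (\sum_j w j) ^+ n.
Proof.
move=> w_ge0; elim: n t => [|n IHn] t /eqP sum_t.
  have t0 j : t j = 0%N.
    by apply/eqP; rewrite -leqn0 -sum_t (bigD1 j) //= leq_addr.
  by rewrite /Mult expr0 !big1 ?fact0 ?divr1 ?mulr1 // => j _; rewrite t0.
have -> : Mult n.+1 w t = \sum_j ((t j)%:R / n.+1%:R * Mult n.+1 w t).
  by rewrite -mulr_suml -mulr_suml -natr_sum sum_t mulfV ?pnatr_eq0 // mul1r.
rewrite exprS mulr_suml; apply: ler_sum => j _.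
case tj: (t j) => [|s].
  by rewrite !mul0r mulr_ge0 ?exprn_ge0 ?sumr_ge0.
rewrite mulrAC -tj (Mult_rec _ _ tj) mulrAC [_.+1%:R * _]mulrC mulfK ?pnatr_eq0 //.
apply: ler_wpM2l => //; apply: IHn.
move: sum_t; rewrite (bigD1 j) //= tj addSn => -[<-].
rewrite /inN (bigD1 j) //= eqxx; apply/eqP; congr (_ + _)%N.
by apply: eq_bigr => k /negbTE ->.
Qed.

End Multinomial.
Section Chernoff.
Variables (R : realType) (q : nat) (u : 'I_q -> R).
Hypotheses (u_ge0 : forall j, 0 <= u j) (u_sum1 : \sum_j u j = 1).

Lemma sum_u_le1 (S : pred 'I_q) : \sum_(j | S j) u j <= 1.
Proof. by rewrite -u_sum1 [leRHS](bigID S) /= lerDl sumr_ge0. Qed.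

Lemma Mult_le_expR_tilt n t (S : pred 'I_q) (mu : R) : inN n t ->
  Mult n u t <= expR (n%:R * ((expR mu - 1) * \sum_(j | S j) u j)
                      - (\sum_(j | S j) t j)%:R * mu).
Proof.
move=> tn; set P := \sum_(j | S j) u j; set T := (\sum_(j | S j) t j)%:R.
pose a := expR mu; have a_gt0 : 0 < a := expR_gt0 mu.
pose w j := if S j then u j * a else u j.
have w_ge0 j : 0 <= w j by rewrite /w; case: (S j); rewrite /= ?mulr_ge0 ?(ltW a_gt0).
have Mult_w : Mult n w t = Mult n u t * expR (T * mu).
  rewrite /Mult -[RHS]mulrA; congr (_ * _).
  rewrite /T natr_sum mulr_suml expR_sum [X in _ * X]big_mkcond -big_split /=.
  apply: eq_bigr => j _.
  by rewrite /w; case: (S j); rewrite /= ?mulr1 // exprMn expRM_natl.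
have sum_w : \sum_j w j = 1 + (a - 1) * P.
  rewrite /P mulr_sumr -[X in X + _]u_sum1 [X in _ + X]big_mkcond -big_split /=.
  by apply: eq_bigr => j _; rewrite /w; case: (S j) => /=; [ring | rewrite addr0].
have P_ge0 : 0 <= P by exact: sumr_ge0.
have P_le1 : P <= 1 := sum_u_le1 S.
have tilt_le : (1 + (a - 1) * P) ^+ n <= expR (n%:R * ((a - 1) * P)).
  rewrite expRM_natl lerXn2r ?nnegrE ?expR_ge0 ?expR_ge1Dx //; nra.
rewrite expRB ler_pdivlMr ?expR_gt0 // -Mult_w.
by apply: le_trans tilt_le; rewrite -sum_w; exact: Mult_le_expr_sum.
Qed.

Lemma Mult_lower_tail n t (S : pred 'I_q) (d : R) : inN n t -> (0 < n)%N ->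
  0 <= d -> (\sum_(j | S j) t j)%:R <= n%:R * \sum_(j | S j) u j - d ->
  Mult n u t <= expR (- (2/5) * (d ^+ 2 / n%:R)).
Proof.
move=> tn n_gt0 d_ge0; set P := \sum_(j | S j) u j; set T := (\sum_(j | S j) t j)%:R.
move=> T_le; set x := n%:R : R; have x_gt0 : 0 < x by rewrite ltr0n.
set e := d / x; have e_ge0 : 0 <= e by rewrite divr_ge0 // ltW.
have dE : d = e * x by rewrite /e divfK ?gt_eqF.
apply: le_trans (Mult_le_expR_tilt S (- (4/5) * e) tn) _; rewrite ler_expR -/P -/T -/x.
have a_le := @expR_le_quad R (- (4/5) * e) ltac:(nra).
have P_ge0 : 0 <= P by exact: sumr_ge0.
have P_le1 : P <= 1 := sum_u_le1 S.
have tilt_quad : x * (P * (expR (- (4/5) * e) - 1))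
          <= x * (P * (- (4/5) * e + 5/8 * (- (4/5) * e) ^+ 2)).
  by apply: ler_wpM2l; [exact: ltW | apply: ler_wpM2l => //; lra].
have deficit : e * T <= e * (x * P - d) by exact: ler_wpM2l.
have P_e2_le : x * (P * e ^+ 2) <= x * e ^+ 2.
  by apply: ler_wpM2l; [exact: ltW | rewrite ler_piMl ?sqr_ge0].
rewrite dE in deficit *.
have -> : e * x * (e * x) / x = e * e * x by field; rewrite gt_eqF.
nra.
Qed.

Lemma Mult_dev_le n t (i : 'I_q) (d : R) : inN n t -> (0 < n)%N -> 0 <= d ->
  d <= `|(t i)%:R - n%:R * u i| ->
  Mult n u t <= expR (- (2/5) * (d ^+ 2 / n%:R)).
Proof.
move=> tn n_gt0 d_ge0; have /eqP sum_t := tn.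
have ui_ge0 := u_ge0 i.
rewrite ler_normr => /orP[dev_up | dev_down].
- apply: (Mult_lower_tail (S := predC1 i)) => //.
  have sumT : (\sum_(j | j != i) t j)%:R = n%:R - (t i)%:R :> R.
    by rewrite -sum_t [in RHS](bigD1 i) //= natrD addrAC subrr add0r.
  have sumP : \sum_(j | j != i) u j = 1 - u i.
    by rewrite -u_sum1 [in RHS](bigD1 i) //= addrAC subrr add0r.
  rewrite sumT sumP; lra.
- apply: (Mult_lower_tail (S := pred1 i)) => //.
  rewrite !big_pred1_eq; lra.
Qed.

End Chernoff.
Theorem corollary3 (R : realType) (K : R) (q : nat) (u : 'I_q -> R) :
  1 < K -> (2 <= q)%N -> is_prob u ->
  exists N : nat, forall n : nat, (N <= n)%N ->
    forall t : 'I_q -> nat, inN n t ->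
      (exists i : 'I_q,
          K * Num.sqrt (n%:R * log2 (n%:R : R)) <= `| (t i)%:R - (n.+1)%:R * u i |) ->
      Mult n u t <= powR (n%:R : R) (- ((K ^+ 2 - 1) / 2)).
Proof.
move=> K_gt1 _ [u_ge0 u_sum1].
exists (maxn 2 (Num.truncn (4 * K ^+ 2)).+1) => n.
rewrite geq_max => /andP[n_ge2 n_gtK] t tn [i dev].
have x_ge2 : 2 <= n%:R :> R by rewrite ler_nat.
have x_gtK : 4 * K ^+ 2 < n%:R :> R.
  by apply: lt_le_trans (truncnS_gt _) _; rewrite ler_nat.
have L_ge1 := log2_ge1 x_ge2.
set s := Num.sqrt _ in dev.
have s_ge : 2 * K <= s.
  rewrite -(@ger0_norm _ (2 * K)) -?sqrtr_sqr ?ler_sqrt; nra.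
have ui_le1 : u i <= 1 by rewrite -u_sum1 (bigD1 i) //= lerDl sumr_ge0.
have dev_n : K * s - 1 <= `|(t i)%:R - n%:R * u i|.
  move: dev; rewrite -natr1 mulrDl mul1r opprD addrA.
  have := ler_normB ((t i)%:R - n%:R * u i) (u i); rewrite (ger0_norm (u_ge0 i)); lra.
apply: le_trans (expR_dev_le_powR K_gt1 x_ge2 s_ge).
apply: (Mult_dev_le u_ge0 u_sum1 tn _ _ dev_n); first exact: leq_trans n_ge2.
nra.
Qed.
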